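(* Let $q\equiv 1\pmod 4$ be a prime power. Then: (1) $SP_q$ has properties $P(1,\frac{q-1}{2})$ and $P(2,\frac{q-5}{4})$; (2) $Tr(SP_q)$ has properties $P(1,q)$, $P(2,\frac{q-1}{2})$ and $P(3,\frac{q-5}{4})$; (3) $AT(SP_q)$ has properties $P(1,q-1)$, $P(2,\frac{q-3}{2})$ and $P(3,\max(0,\frac{q-9}{4}))$.
   Context: A signified graph is a simple graph with each edge labelled positive or negative. For $x\in\mathbb{F}_q^*$ let $\mathrm{sq}(x)=+1$ if $x$ is a square and $-1$ otherwise. $SP_q$ is the complete graph on $\mathbb{F}_q$ where $xy$ is negative iff $\mathrm{sq}(y-x)=-1$. For a signified graph $(H,\Lambda)$, $AT(H,\Lambda)$ has vertex set $\{u_0,u_1:u\in V(H)\}$; for every edge $uv$ of $H$ it has edges $u_0v_0,u_1v_1$ with the sign of $uv$ and $u_0v_1,u_1v_0$ with the opposite sign; no other edges. $Tr(SP_q)=AT(SP_q^+)$ where $SP_q^+$ is $SP_q$ plus a vertex $\infty$ joined positively to all vertices; explicitly its vertices are $u_i$, $u\in\mathbb{F}_q\cup\{\infty\}$, $i\in\{0,1\}$, with $u_iv_j$ ($u\ne v\in\mathbb{F}_q$) an edge of sign $\mathrm{sq}(u-v)(-1)^{i+j}$, $\infty_iv_j$ an edge of sign $(-1)^{i+j}$, and no other edges. A signed vector of size $k$ is an element of $\{+1,-1\}^k$. For a sequence $X=(v_1,\dots,v_k)$ of $k$ distinct pairwise adjacent vertices and a signed vector $\alpha$, a vertex $u$ is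 an $\alpha$-successor of $X$ if $uv_i$ is an edge of sign $\alpha_i$ for all $i$. A signified graph has property $P(k,l)$ if every sequence of $k$ distinct pairwise adjacent vertices has at least $l$ $\alpha$-successors for every signed vector $\alpha$ of size $k$. *)

From HB Require Import structures.
From mathcomp Require Import all_boot all_order all_algebra all_field.
Set Implicit Arguments. Unset Strict Implicit. Unset Printing Implicit Defensive.
Import GRing.Theory.
Local Open Scope ring_scope.

(* A signified graph on a finite vertex type: an adjacency relation and,
   for adjacent vertices, a sign (true = positive, false = negative). *)
Record sigraph (V : finType) := SiGraph {
  sg_adj : rel V;
  sg_pos : V -> V -> bool }.

Definition issq (F : finFieldType) (x : F) : bool := [exists y : F, y * y == x].

Definition SP (F : finFieldType) : sigraph F :=
  SiGraph (fun x y : F => x != y) (fun x y : F => issq (y - x)).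

(* SP_q^+ : add a vertex infinity (= None) joined positively to everything *)
Definition SPplus (F : finFieldType) : sigraph (option F) :=
  SiGraph (fun x y : option F => x != y)
          (fun x y : option F =>
             match x, y with Some a, Some b => issq (b - a) | _, _ => true end).

(* AT(H): vertices (u, i), i in {0,1} encoded as bool; u_i v_j is an edge iff
   uv is, with the sign of uv if i = j and the opposite sign otherwise. *)
Definition AT (V : finType) (H : sigraph V) : sigraph (prod V bool) :=
  SiGraph (fun x y : V * bool => sg_adj H x.1 y.1)
          (fun x y : V * bool => sg_pos H x.1 y.1 == (x.2 == y.2)).

Definition Tr (F : finFieldType) : sigraph (prod (option F) bool) := AT (SPplus F).

Definition clique_seq (V : finType) (G : sigraph V) (k : nat) (X : k.-tuple V) : bool :=
  uniq X && [forall i : 'I_k, forall j : 'I_k,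
               (i != j) ==> sg_adj G (tnth X i) (tnth X j)].

Definition successor (V : finType) (G : sigraph V) (k : nat)
    (X : k.-tuple V) (alpha : k.-tuple bool) (u : V) : bool :=
  [forall i : 'I_k, sg_adj G u (tnth X i) && (sg_pos G u (tnth X i) == tnth alpha i)].

Definition propP (V : finType) (G : sigraph V) (k l : nat) : Prop :=
  forall X : k.-tuple V, clique_seq G X ->
  forall alpha : k.-tuple bool,
    (l <= #|[set u | successor G X alpha u]|)%N.

From mathcomp Require Import all_boot all_order all_algebra all_field.
From mathcomp Require Import zify ring lra.
Set Implicit Arguments. Unset Strict Implicit. Unset Printing Implicit Defensive.
Import Order.TTheory GRing.Theory Num.Theory.
Local Open Scope ring_scope.

(* Let chi be the quadratic character of F (q odd suffices;
   q = 1 mod 4 is only used through oddness).  By Euler's criterion chi is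
   multiplicative, whence sum_y chi(v - y) = 0 and, for a != b, the Jacobi sum
   sum_y chi(a - y) chi(b - y) = -1.
   A sequence X with signed vector alpha is read as a list of sign constraints
   (X_i, alpha_i); its successors are the vertices meeting all of them.  For a
   constraint (v, b) of SP_q the weight w(y) = sgn b * chi(v - y) is 1 if y
   meets it, -1 if y meets the reverse constraint and 0 if y = v, so products
   of the (1 + w_i) bound the indicator of the successor set up to terms at
   the y = v_i; summing with the character sums gives the bounds for SP_q.
   In AT(H) a vertex (y, j) meets the constraints iff y meets, in H, a fixed
   pattern (j = 1) or its reverse (j = 0): successors in AT(H) are counted by
   a "balanced" count in H, where odd products of weights cancel.  Finally
   Tr(SP_q) = AT(SP_q^+), and constraints in SP_q^+ are either all finite,
   where infinity adds one successor when the pattern is constant, or contain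
   infinity, which leaves a pattern on one vertex fewer in SP_q. *)

Section QuadraticCharacter.
Variable F : finFieldType.
Hypothesis oddF : odd #|F|.
Local Notation q := #|F|.

(* The exponent of Euler's criterion, (q - 1) / 2. *)
Let m := q./2.

Lemma card_F_half : q = (m * 2).+1.
Proof. by rewrite -[LHS]odd_double_half oddF muln2. Qed.

Lemma half_gt0 : (0 < m)%N.
Proof. by have := finNzRing_gt1 F; rewrite card_F_half; case: (m). Qed.

(* A field of odd order does not have characteristic 2, whose finite fields
   have order a power of 2. *)
Lemma two_neq0 : (2%:R : F) != 0.
Proof.
apply/negP => two0.
have char2 : (2%N \in [pchar F]) by apply/andP.
have cardF : q = (2 ^ logn 2 q)%N by exact: card_pprimeChar char2.
move: oddF (finNzRing_gt1 F); rewrite cardF.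
by case: (logn 2 _) => [|n]; rewrite ?expnS ?oddM.
Qed.

Lemma oppr1_neq1 : (-1 : F) != 1.
Proof.
apply: contraNneq two_neq0 => eqN11.
by rewrite -[2%:R]/(1 + 1 : F) -{1}eqN11 addNr.
Qed.

Lemma expf_card_pred (x : F) : x != 0 -> x ^+ (m * 2) = 1.
Proof. by move=> x0; apply: (mulfI x0); rewrite -exprS -card_F_half expf_card mulr1. Qed.

Let squares := [set x : F | (x != 0) && issq x].
Let half_roots := [set x : F | x ^+ m == 1].

(* A nonzero square y^2 satisfies y^(2m) = y^(q-1) = 1. *)
Lemma squares_sub : squares \subset half_roots.
Proof.
apply/subsetP => x; rewrite !inE => /andP [x0 /existsP [y /eqP yy]].
rewrite -yy in x0 *.
have y0 : y != 0 by apply: contraNneq x0 => ->; rewrite mul0r.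
by rewrite -expr2 -exprM mulnC expf_card_pred.
Qed.

Lemma card_half_roots : (#|half_roots| <= m)%N.
Proof.
have p0 : ('X^m - 1%:P : {poly F}) != 0.
  by rewrite -size_poly_eq0 size_XnsubC ?half_gt0.
rewrite cardE -ltnS -(size_XnsubC (1 : F) half_gt0).
apply: max_poly_roots p0 _ (enum_uniq _).
apply/allP => x; rewrite mem_enum inE rootE !hornerE => /eqP xm.
by rewrite xm subrr.
Qed.

(* Each nonzero z is a root of the product of the X^2 - s, s a nonzero square;
   that product has degree 2 #|squares|, so there are at least m squares. *)
Lemma card_squares : (m <= #|squares|)%N.
Proof.
pose P := \prod_(s in squares) ('X^2 - s%:P : {poly F}).
have P0 : P != 0.
  by apply/prodf_neq0 => s _; rewrite -size_poly_eq0 size_XnsubC.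
have sizeP : size P = (#|squares| * 2).+1.
  rewrite size_prod => [|s _]; last by rewrite -size_poly_eq0 size_XnsubC.
  rewrite (eq_bigr (fun _ => 3%N)) => [|s _]; last by rewrite size_XnsubC.
  by rewrite sum_nat_const (eq_card (B := squares)) //; lia.
have nonzero : #|[set~ (0 : F)]| = (m * 2)%N.
  by rewrite cardsC1 card_F_half.
rewrite -(leq_pmul2r (isT : (0 < 2)%N)) -nonzero -ltnS -sizeP cardE.
apply: max_poly_roots P0 _ (enum_uniq _).
apply/allP => z; rewrite mem_enum !inE => z0.
rewrite rootE horner_prod; apply/prodf_eq0; exists (z * z).
  by rewrite inE mulf_neq0 //; apply/existsP; exists z.
by rewrite !hornerE expr2 subrr.
Qed.

Lemma issq_euler (x : F) : x != 0 -> issq x = (x ^+ m == 1).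
Proof.
have eq_sets : squares = half_roots.
  apply/eqP; rewrite eqEcard squares_sub.
  exact: leq_trans card_half_roots card_squares.
by move=> x0; have := congr1 (fun A : {set F} => x \in A) eq_sets; rewrite !inE x0.
Qed.

(* Since at most m of the 2m nonzero elements are squares. *)
Lemma exists_nonsquare : exists2 g : F, g != 0 & ~~ issq g.
Proof.
have : ~~ ([set~ (0 : F)] \subset half_roots).
  apply: contraL card_half_roots => /subset_leq_card nz_le.
  rewrite -ltnNge; apply: leq_trans nz_le.
  by rewrite cardsC1 card_F_half; have := half_gt0; lia.
case/subsetPn => g; rewrite !inE => g0 gm; exists g => //.
by rewrite issq_euler.
Qed.

Definition chi (x : F) : int := if x == 0 then 0 else if issq x then 1 else -1.

Lemma chi0 : chi 0 = 0. Proof. by rewrite /chi eqxx. Qed.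

Lemma chi1 : chi 1 = 1.
Proof. by rewrite /chi oner_eq0 (_ : issq 1) //; apply/existsP; exists 1; rewrite mulr1. Qed.

Lemma chi_euler (x : F) : x != 0 -> chi x = if x ^+ m == 1 then 1 else -1.
Proof. by move=> x0; rewrite /chi (negbTE x0) issq_euler. Qed.

(* x^m squares to 1, hence is 1 or -1. *)
Lemma expf_half_sign (x : F) : x != 0 -> x ^+ m = 1 \/ x ^+ m = -1.
Proof.
move=> x0; have : (x ^+ m) ^+ 2 == 1 by rewrite -exprM expf_card_pred.
by rewrite sqrf_eq1 => /orP [/eqP -> | /eqP ->]; [left | right].
Qed.

(* chi is multiplicative, as x |-> x^m is. *)
Lemma chiM (x y : F) : chi (x * y) = chi x * chi y.
Proof.
have [-> | x0] := eqVneq x 0; first by rewrite mul0r chi0 mul0r.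
have [-> | y0] := eqVneq y 0; first by rewrite mulr0 chi0 mulr0.
rewrite !chi_euler ?mulf_neq0 // exprMn.
have N1 := oppr1_neq1; have N1' : (1 : F) != -1 by rewrite eq_sym.
by case: (expf_half_sign x0) => ->; case: (expf_half_sign y0) => ->;
  rewrite ?mulr1 ?mul1r ?mulN1r ?opprK ?eqxx ?(negbTE N1) ?(negbTE N1').
Qed.

Lemma chi_sqr (x : F) : x != 0 -> chi x * chi x = 1.
Proof. by move=> x0; rewrite chi_euler //; case: ifP. Qed.

(* Multiplying by a nonsquare permutes F and negates chi. *)
Lemma sum_chi : \sum_(x : F) chi x = 0.
Proof.
have [g g0 gns] := exists_nonsquare.
have chig : chi g = -1 by rewrite /chi (negbTE g0) (negbTE gns).
have sumN : \sum_(x : F) chi x = - \sum_(x : F) chi x.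
  rewrite {1}(reindex_inj (mulfI g0)) /= -sumrN.
  by apply: eq_bigr => x _; rewrite chiM chig mulN1r.
by move: sumN; lia.
Qed.

Lemma sum_chi_sub (v : F) : \sum_(y : F) chi (v - y) = 0.
Proof.
rewrite (reindex_inj (inv_inj (subKr v))) /= -[RHS]sum_chi.
by apply: eq_bigr => y _; rewrite subKr.
Qed.

(* Jacobi sum: for z != 0, chi z chi (z + c) = chi (1 + c / z), and
   z |-> 1 + c / z is a bijection of F sending 0 to 1. *)
Lemma jacobi_sum (a b : F) : a != b ->
  \sum_(y : F) chi (a - y) * chi (b - y) = -1.
Proof.
move=> ab; set c := b - a.
have c0 : c != 0 by rewrite subr_eq0 eq_sym.
have chi_pair (z : F) : chi z * chi (z + c) = chi (1 + c * z^-1) - (z == 0)%:R.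
  have [-> | z0] := eqVneq z 0; first by rewrite chi0 mul0r invr0 mulr0 addr0 chi1 subrr.
  rewrite (_ : z + c = z * (1 + c * z^-1)); last by rewrite mulrDr mulr1 mulrCA divff ?mulr1.
  by rewrite chiM mulrA chi_sqr // mul1r subr0.
have inj : injective (fun z : F => 1 + c * z^-1).
  by move=> x y /addrI /(mulfI c0) /invr_inj.
rewrite (reindex_inj (inv_inj (subKr a))) /=.
have shift (y : F) : b - (a - y) = y + c by rewrite /c; ring.
under eq_bigr => y _ do rewrite subKr shift chi_pair.
rewrite sumrB -(reindex_inj (P := xpredT) (F := chi) inj) sum_chi add0r.
by rewrite (bigD1 0) //= eqxx big1 ?addr0 // => y /negbTE ->.
Qed.
End QuadraticCharacter.

Definition sgn (b : bool) : int := if b then 1 else -1.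

Lemma sgn_eq (a b : bool) : sgn (a == b) = sgn a * sgn b.
Proof. by case: a; case: b. Qed.

Lemma sgn_mul_le1 (a b : bool) : sgn a * sgn b <= 1.
Proof. by case: a; case: b. Qed.

Lemma card_sum (V : finType) (A : {set V}) :
  (#|A|%:R : int) = \sum_(y : V) (y \in A)%:R.
Proof.
rewrite -sum1_card natr_sum big_mkcond /=.
by apply: eq_bigr => y _; case: (y \in A).
Qed.

Lemma sum_one (V : finType) : \sum_(y : V) (1 : int) = #|V|%:R.
Proof. by rewrite sumr_const cardT -cardE. Qed.

Lemma sum_delta (V : finType) (v : V) : \sum_(y : V) ((y == v)%:R : int) = 1.
Proof. by rewrite (bigD1 v) //= eqxx big1 ?addr0 // => y /negbTE ->. Qed.

Lemma card_set_pair_bool (V : finType) (P : pred (V * bool)) :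
  #|[set u | P u]| = (#|[set y | P (y, true)]| + #|[set y | P (y, false)]|)%N.
Proof.
apply/eqP; rewrite -(eqr_nat int) natrD !card_sum; apply/eqP.
transitivity (\sum_(y : V) \sum_(j : bool) ((P (y, j))%:R : int)).
  by rewrite pair_big /=; apply: eq_bigr => -[y j] _; rewrite inE.
by rewrite -big_split; apply: eq_bigr => y _; rewrite big_bool !inE.
Qed.

Lemma sum_option (V : finType) (g : option V -> int) :
  \sum_(w : option V) g w = g None + \sum_(y : V) g (Some y).
Proof.
rewrite (bigD1 None) //=; congr (_ + _).
rewrite (reindex_omap Some id) /=; last by case.
by apply: eq_bigl => x; rewrite eqxx.
Qed.

Lemma card_set_option (V : finType) (P : pred (option V)) :
  #|[set w | P w]| = (P None + #|[set y | P (Some y)]|)%N.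
Proof.
apply/eqP; rewrite -(eqr_nat int) natrD !card_sum sum_option.
by rewrite inE; apply/eqP; congr (_ + _); apply: eq_bigr => y _; rewrite !inE.
Qed.

Lemma divn_lower_bound (n k c N : nat) : (0 < c)%N ->
  (n%:R - k%:R <= (c * N)%:R :> int) -> ((n - k) %/ c <= N)%N.
Proof.
move=> c0; rewrite lerBlDr -natrD ler_nat => le_n.
by rewrite -(mulKn N c0) leq_div2r //; lia.
Qed.

Section SignConstraints.
Variables (V : finType) (G : sigraph V).

Definition sign_nb (v : V) (a : bool) (u : V) : bool :=
  sg_adj G u v && (sg_pos G u v == a).

Definition nbset (c : seq (V * bool)) : {set V} :=
  [set u | all (fun p => sign_nb p.1 p.2 u) c].

Lemma nbset_perm (c c' : seq (V * bool)) : perm_eq c c' -> nbset c = nbset c'.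
Proof. by move=> perm_c; apply/setP => u; rewrite !inE (perm_all _ perm_c). Qed.

(* Property P(k, l) holds as soon as every list of k constraints on pairwise
   adjacent vertices is met by l vertices: a sequence X with a signed vector
   alpha is the list of constraints (X_i, alpha_i). *)
Lemma propP_of_nbset (k l : nat) :
  (forall c : seq (V * bool), size c = k -> pairwise (sg_adj G) (map fst c) ->
     (l <= #|nbset c|)%N) -> propP G k l.
Proof.
move=> bound X cliqueX alpha.
set c := [seq (tnth X i, tnth alpha i) | i <- enum 'I_k].
have -> : [set u | successor G X alpha u] = nbset c.
  apply/setP => u; rewrite !inE /successor all_map.
  by apply/forallP/allP => [h i _ | h i]; [exact: h | exact: h _ (mem_enum _ i)].
apply: bound; first by rewrite size_map size_enum_ord.
rewrite -map_comp pairwise_map; apply: (@sub_pairwise _ [rel i j : 'I_k | i != j]).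
  by move=> i j /= ij; case/andP: cliqueX => _ /forallP /(_ i) /forallP /(_ j) /implyP; apply.
by rewrite -uniq_pairwise enum_uniq.
Qed.
End SignConstraints.

Section Antitwinned.
Variables (V : finType) (H : sigraph V).

Definition flip (d : seq (V * bool)) : seq (V * bool) := [seq (p.1, ~~ p.2) | p <- d].

Definition balanced_count (d : seq (V * bool)) : nat :=
  #|nbset H d| + #|nbset H (flip d)|.

(* In AT(H) the sheet j of u = (y, j) decides whether y must see v with the
   sign of the constraint or with the opposite one. *)
Lemma sign_nb_AT (x : V * bool) (a : bool) (y : V) (j : bool) :
  sign_nb (AT H) x a (y, j) = sign_nb H x.1 ((x.2 == a) == j) y.
Proof. by rewrite /sign_nb /=; case: (sg_pos H y x.1); case: x.2; case: a; case: j. Qed.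

Lemma card_nbset_AT (c : seq ((V * bool) * bool)) :
  #|nbset (AT H) c| = balanced_count [seq (p.1.1, p.1.2 == p.2) | p <- c].
Proof.
rewrite /nbset card_set_pair_bool /balanced_count /flip -map_comp.
by congr addn; apply: eq_card => y; rewrite !inE !all_map;
  apply: eq_all => p /=; rewrite sign_nb_AT ?eqb_id ?eqbF_neg.
Qed.

Lemma AT_propP (k l : nat) :
  (forall d : seq (V * bool), size d = k -> pairwise (sg_adj H) (map fst d) ->
     (l <= balanced_count d)%N) -> propP (AT H) k l.
Proof.
move=> bound; apply: propP_of_nbset => c size_c adj_c.
rewrite card_nbset_AT; apply: bound; first by rewrite size_map.
by move: adj_c; rewrite -map_comp !pairwise_map.
Qed.

(* A single constraint: every neighbour y of v is a successor on exactly one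
   sheet, so AT(H) has P(1, l) whenever H has minimum degree at least l. *)
Lemma AT_propP1 (l : nat) :
  (forall v : V, (l <= #|[set y | sg_adj H y v]|)%N) -> propP (AT H) 1 l.
Proof.
move=> degree; apply: AT_propP => -[|[v b] []] //= _ _.
apply: leq_trans (degree v) _.
rewrite -(cardsID [set y | sg_pos H y v == b]) /balanced_count.
apply: eq_leq; congr addn; apply: eq_card => y; rewrite !inE /sign_nb /= !andbT andbC //.
by case: (sg_pos H y v); case: b.
Qed.
End Antitwinned.

(* The value at a vertex y of the character weight of a constraint (v, b):
   0 when y = v (d = true), and otherwise +1 or -1 according as y meets the
   constraint (c = true) or meets its reverse. *)
Definition local_weight (d c : bool) : int := if d then 0 else sgn c.

Lemma weight1_le (d c : bool) :
  1 + local_weight d c <= 2 * (~~ d && c)%:R + d%:R.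
Proof. by case: d; case: c. Qed.

Lemma weight2_le (d1 c1 d2 c2 : bool) :
  let w1 := local_weight d1 c1 in let w2 := local_weight d2 c2 in
  1 + w1 + w2 + w1 * w2 <=
  4 * (~~ d1 && c1 && (~~ d2 && c2))%:R + 2 * d1%:R + 2 * d2%:R.
Proof. by case: d1; case: c1; case: d2; case: c2. Qed.

Lemma weight2_balanced_le (d1 c1 d2 c2 : bool) :
  let w1 := local_weight d1 c1 in let w2 := local_weight d2 c2 in
  1 + w1 * w2 <=
  2 * ((~~ d1 && c1 && (~~ d2 && c2))%:R + (~~ d1 && ~~ c1 && (~~ d2 && ~~ c2))%:R)
  + d1%:R + d2%:R.
Proof. by case: d1; case: c1; case: d2; case: c2. Qed.

Lemma weight3_balanced_le (d1 c1 d2 c2 d3 c3 : bool) :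
  let w1 := local_weight d1 c1 in let w2 := local_weight d2 c2 in
  let w3 := local_weight d3 c3 in
  1 + w1 * w2 + w1 * w3 + w2 * w3 <=
  4 * ((~~ d1 && c1 && (~~ d2 && c2 && (~~ d3 && c3)))%:R
       + (~~ d1 && ~~ c1 && (~~ d2 && ~~ c2 && (~~ d3 && ~~ c3)))%:R)
  + 2 * (d1%:R + d2%:R + d3%:R).
Proof. by case: d1; case: c1; case: d2; case: c2; case: d3; case: c3. Qed.

Section PaleyCounts.
Variable F : finFieldType.
Hypothesis oddF : odd #|F|.
Local Notation q := #|F|.

Definition weight (v : F) (b : bool) (y : F) : int := sgn b * chi (v - y).

Lemma weightE (v : F) (b : bool) (y : F) :
  weight v b y = local_weight (y == v) (issq (v - y) == b).
Proof.
rewrite /weight /local_weight /chi subr_eq0 eq_sym.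
by case: (y == v); rewrite ?mulr0 // sgn_eq mulrC.
Qed.

Lemma sign_nb_SP (v : F) (b : bool) (y : F) :
  sign_nb (SP F) v b y = ~~ (y == v) && (issq (v - y) == b).
Proof. by []. Qed.

Lemma sign_nb_SP_flip (v : F) (b : bool) (y : F) :
  sign_nb (SP F) v (~~ b) y = ~~ (y == v) && ~~ (issq (v - y) == b).
Proof. by rewrite sign_nb_SP; case: (issq _); case: b. Qed.

Lemma sum_weight (v : F) (b : bool) : \sum_(y : F) weight v b y = 0.
Proof. by rewrite -mulr_sumr sum_chi_sub ?mulr0. Qed.

Lemma sum_weight2 (v1 v2 : F) (b1 b2 : bool) : v1 != v2 ->
  \sum_(y : F) weight v1 b1 y * weight v2 b2 y = - (sgn b1 * sgn b2).
Proof.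
move=> v12; rewrite /weight.
under eq_bigr => y _ do rewrite mulrACA.
by rewrite -mulr_sumr jacobi_sum // mulrN1.
Qed.

Local Notation nbSP := (nbset (SP F)).

(* Summing the pointwise comparisons against the character sums gives the
   lower bounds on the successor counts. *)
Lemma SP_count1 (v : F) (b : bool) : q%:R - 1 <= 2 * #|nbSP [:: (v, b)]|%:R :> int.
Proof.
have le_sum : \sum_(y : F) (1 + weight v b y) <=
    \sum_(y : F) (2 * (y \in nbSP [:: (v, b)])%:R + (y == v)%:R).
  apply: ler_sum => y _; rewrite weightE inE /= andbT sign_nb_SP.
  exact: weight1_le.
move: le_sum; rewrite !big_split /= sum_one sum_weight sum_delta -mulr_sumr -card_sum.
lra.
Qed.

Lemma SP_count2 (v1 v2 : F) (b1 b2 : bool) : v1 != v2 ->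
  q%:R - 4 - sgn b1 * sgn b2 <= 4 * #|nbSP [:: (v1, b1); (v2, b2)]|%:R :> int.
Proof.
move=> v12.
have le_sum : \sum_(y : F)
      (1 + weight v1 b1 y + weight v2 b2 y + weight v1 b1 y * weight v2 b2 y) <=
    \sum_(y : F) (4 * (y \in nbSP [:: (v1, b1); (v2, b2)])%:R
                   + 2 * (y == v1)%:R + 2 * (y == v2)%:R).
  apply: ler_sum => y _; rewrite !weightE inE /= andbT !sign_nb_SP.
  exact: weight2_le.
move: le_sum; rewrite !big_split /= sum_one !sum_weight sum_weight2 //.
rewrite -!mulr_sumr !sum_delta -card_sum; lra.
Qed.

Lemma SP_balanced_count2 (v1 v2 : F) (b1 b2 : bool) : v1 != v2 ->
  q%:R - 2 - sgn b1 * sgn b2 <=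
  2 * (balanced_count (SP F) [:: (v1, b1); (v2, b2)])%:R :> int.
Proof.
move=> v12.
have le_sum : \sum_(y : F) (1 + weight v1 b1 y * weight v2 b2 y) <=
    \sum_(y : F) (2 * ((y \in nbSP [:: (v1, b1); (v2, b2)])%:R
                        + (y \in nbSP (flip [:: (v1, b1); (v2, b2)]))%:R)
                   + (y == v1)%:R + (y == v2)%:R).
  apply: ler_sum => y _; rewrite !weightE !inE /= !andbT !sign_nb_SP_flip !sign_nb_SP.
  exact: weight2_balanced_le.
move: le_sum; rewrite !big_split /= sum_one sum_weight2 //.
rewrite -!mulr_sumr big_split /= !sum_delta -!card_sum /balanced_count natrD; lra.
Qed.

Lemma SP_balanced_count3 (v1 v2 v3 : F) (b1 b2 b3 : bool) :
  v1 != v2 -> v1 != v3 -> v2 != v3 ->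
  q%:R - 6 - (sgn b1 * sgn b2 + sgn b1 * sgn b3 + sgn b2 * sgn b3) <=
  4 * (balanced_count (SP F) [:: (v1, b1); (v2, b2); (v3, b3)])%:R :> int.
Proof.
move=> v12 v13 v23; set d := [:: (v1, b1); (v2, b2); (v3, b3)].
have le_sum : \sum_(y : F) (1 + weight v1 b1 y * weight v2 b2 y
        + weight v1 b1 y * weight v3 b3 y + weight v2 b2 y * weight v3 b3 y) <=
    \sum_(y : F) (4 * ((y \in nbSP d)%:R + (y \in nbSP (flip d))%:R)
                   + 2 * ((y == v1)%:R + (y == v2)%:R + (y == v3)%:R)).
  apply: ler_sum => y _; rewrite !weightE !inE /= !andbT !sign_nb_SP_flip !sign_nb_SP.
  exact: weight3_balanced_le.
move: le_sum; rewrite !big_split /= sum_one !sum_weight2 //.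
rewrite -!mulr_sumr !big_split /= !sum_delta -!card_sum /balanced_count natrD; lra.
Qed.
End PaleyCounts.

Section InfinityVertex.
Variable F : finFieldType.

Definition lift (d : seq (F * bool)) : seq (option F * bool) :=
  [seq (Some p.1, p.2) | p <- d].

Lemma map_fst_lift (d : seq (F * bool)) : map fst (lift d) = map Some (map fst d).
Proof. by rewrite -!map_comp. Qed.

Lemma flip_lift (d : seq (F * bool)) : flip (lift d) = lift (flip d).
Proof. by rewrite /flip /lift -!map_comp. Qed.

Lemma sign_nb_SPplus_some (v : F) (b : bool) (y : F) :
  sign_nb (SPplus F) (Some v) b (Some y) = sign_nb (SP F) v b y.
Proof. by rewrite /sign_nb /= (inj_eq (@Some_inj _)). Qed.

(* Infinity meets the constraints of finite vertices iff they are all positive. *)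
Lemma card_nbset_lift (d : seq (F * bool)) :
  #|nbset (SPplus F) (lift d)| = (all snd d + #|nbset (SP F) d|)%N.
Proof.
rewrite /nbset card_set_option !all_map; congr addn.
by apply: eq_card => y; rewrite !inE all_map; apply: eq_all => -[v b] /=;
  rewrite sign_nb_SPplus_some.
Qed.

Lemma card_nbset_infty (b0 : bool) (d : seq (F * bool)) :
  #|nbset (SPplus F) ((None, b0) :: lift d)| = if b0 then #|nbset (SP F) d| else 0%N.
Proof.
rewrite /nbset card_set_option /= {1}/sign_nb /= add0n.
case: b0; last by apply: eq_card0 => y; rewrite inE.
by apply: eq_card => y; rewrite !inE all_map; apply: eq_all => -[v b] /=;
  rewrite sign_nb_SPplus_some.
Qed.

(* The same in balanced form; there infinity counts once for a constant
   pattern and never otherwise. *)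
Lemma balanced_count_lift (d : seq (F * bool)) :
  balanced_count (SPplus F) (lift d) =
  (all snd d + all snd (flip d) + balanced_count (SP F) d)%N.
Proof. by rewrite /balanced_count flip_lift !card_nbset_lift addnACA. Qed.

Lemma balanced_count_infty (b0 : bool) (d : seq (F * bool)) :
  balanced_count (SPplus F) ((None, b0) :: lift d) =
  #|nbset (SP F) (if b0 then d else flip d)|.
Proof.
by rewrite /balanced_count /= flip_lift -[(None, ~~ b0) :: _]/((None, ~~ b0) :: _)
  !card_nbset_infty; case: b0; rewrite ?addn0.
Qed.

Lemma split_infinity (d : seq (option F * bool)) : uniq (map fst d) ->
  (exists d', d = lift d') \/ (exists b0 d', perm_eq d ((None, b0) :: lift d')).
Proof.
elim: d => [_ | [w b] d IH /= /andP [w_notin uniq_d]]; first by left; exists [::].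
case: w w_notin => [v | ] w_notin; case: (IH uniq_d) => [[d' ->] | [b0 [d' perm_d]]].
- by left; exists ((v, b) :: d').
- right; exists b0, ((v, b) :: d'); rewrite -(perm_cons (Some v, b)) in perm_d.
  by apply: (perm_trans perm_d); rewrite (perm_catCA [:: _] [:: _]).
- by right; exists b, d'.
- by rewrite (perm_mem (perm_map fst perm_d)) inE eqxx in w_notin.
Qed.

(* Reduction of Tr(SP_q) = AT(SP_q^+) to counts in SP_q: without infinity
   among the constraints, infinity itself adds to the balanced count in SP_q;
   with infinity, only a pattern on the remaining finite vertices is left. *)
Lemma Tr_propP (k l : nat) :
  (forall d : seq (F * bool), size d = k -> uniq (map fst d) ->
     (l <= all snd d + all snd (flip d) + balanced_count (SP F) d)%N) ->
  (forall d : seq (F * bool), size d = k.-1 -> uniq (map fst d) ->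
     (l <= #|nbset (SP F) d|)%N) ->
  propP (Tr F) k l.
Proof.
move=> finite_bound infty_bound; apply: AT_propP => d size_d adj_d.
have uniq_d : uniq (map fst d) by rewrite uniq_pairwise.
case: (split_infinity uniq_d) => [[d' def_d] | [b0 [d' perm_d]]].
  move: size_d uniq_d; rewrite def_d balanced_count_lift size_map map_fst_lift.
  by rewrite (map_inj_uniq (@Some_inj _)); exact: finite_bound.
have := perm_uniq (perm_map fst perm_d); rewrite uniq_d /= map_fst_lift.
rewrite (map_inj_uniq (@Some_inj _)) => /esym /andP [_ uniq_d'].
have size_d' : size d' = k.-1 by rewrite -size_d (perm_size perm_d) /= size_map.
have flip_d' : size (flip d') = k.-1 /\ uniq (map fst (flip d')).
  by rewrite /flip size_map -map_comp.
have -> : balanced_count (SPplus F) d = balanced_count (SPplus F) ((None, b0) :: lift d').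
  by rewrite /balanced_count (nbset_perm _ perm_d) (nbset_perm _ (perm_map _ perm_d)).
rewrite balanced_count_infty; case: b0 {perm_d}; first exact: infty_bound.
by case: flip_d'; exact: infty_bound.
Qed.
End InfinityVertex.

Lemma constant_signs2 (b1 b2 : bool) :
  2 * ((b1 && b2)%:R + (~~ b1 && ~~ b2)%:R) = 1 + sgn b1 * sgn b2 :> int.
Proof. by case: b1; case: b2. Qed.

Lemma constant_signs3 (b1 b2 b3 : bool) :
  4 * ((b1 && (b2 && b3))%:R + (~~ b1 && (~~ b2 && ~~ b3))%:R) =
  1 + (sgn b1 * sgn b2 + sgn b1 * sgn b3 + sgn b2 * sgn b3) :> int.
Proof. by case: b1; case: b2; case: b3. Qed.

Section Properties.
Variable F : finFieldType.
Hypothesis oddF : odd #|F|.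
Local Notation q := #|F|.

Lemma SP_propP1 : propP (SP F) 1 ((q - 1) %/ 2).
Proof.
apply: propP_of_nbset => -[|[v b] []] //= _ _.
by apply: divn_lower_bound => //; rewrite natrM; exact: SP_count1.
Qed.

Lemma SP_propP2 : propP (SP F) 2 ((q - 5) %/ 4).
Proof.
apply: propP_of_nbset => -[|[v1 b1] [|[v2 b2] []]] //= _ /andP [/andP [v12 _] _].
apply: divn_lower_bound => //; rewrite natrM.
by have := SP_count2 oddF b1 b2 v12; have := sgn_mul_le1 b1 b2; lra.
Qed.

Lemma ATSP_propP1 : propP (AT (SP F)) 1 (q - 1).
Proof.
apply: AT_propP1 => v; rewrite subn1 -(cardsC1 v).
by apply: subset_leq_card; apply/subsetP => y; rewrite !inE.
Qed.

Lemma ATSP_propP2 : propP (AT (SP F)) 2 ((q - 3) %/ 2).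
Proof.
apply: AT_propP => -[|[v1 b1] [|[v2 b2] []]] //= _ /andP [/andP [v12 _] _].
apply: divn_lower_bound => //; rewrite natrM.
by have := SP_balanced_count2 oddF b1 b2 v12; have := sgn_mul_le1 b1 b2; lra.
Qed.

Lemma ATSP_propP3 : propP (AT (SP F)) 3 (maxn 0 ((q - 9) %/ 4)).
Proof.
rewrite max0n; apply: AT_propP => -[|[v1 b1] [|[v2 b2] [|[v3 b3] []]]] //= _.
rewrite !andbT => /andP [/andP [v12 v13] v23].
apply: divn_lower_bound => //; rewrite natrM.
have := SP_balanced_count3 oddF b1 b2 b3 v12 v13 v23.
by have := sgn_mul_le1 b1 b2; have := sgn_mul_le1 b1 b3; have := sgn_mul_le1 b2 b3; lra.
Qed.

Lemma Tr_propP1 : propP (Tr F) 1 q.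
Proof.
apply: AT_propP1 => v; have -> : q = #|[set~ v]| by rewrite cardsC1 card_option.
by apply: subset_leq_card; apply/subsetP => y; rewrite !inE.
Qed.

Lemma Tr_propP2 : propP (Tr F) 2 ((q - 1) %/ 2).
Proof.
apply: Tr_propP.
- move=> [|[v1 b1] [|[v2 b2] []]] //= _; rewrite inE andbT => v12.
  apply: divn_lower_bound => //; rewrite !andbT natrM !natrD.
  have := SP_balanced_count2 oddF b1 b2 v12; rewrite /balanced_count natrD.
  by have := constant_signs2 b1 b2; lra.
- move=> [|[v b] []] //= _ _.
  by apply: divn_lower_bound => //; rewrite natrM; exact: SP_count1.
Qed.

Lemma Tr_propP3 : propP (Tr F) 3 ((q - 5) %/ 4).
Proof.
apply: Tr_propP.
- move=> [|[v1 b1] [|[v2 b2] [|[v3 b3] []]]] //= _.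
  rewrite !inE !negb_or !andbT => /andP [/andP [v12 v13] v23].
  apply: divn_lower_bound => //; rewrite natrM !natrD.
  have := SP_balanced_count3 oddF b1 b2 b3 v12 v13 v23; rewrite /balanced_count natrD.
  by have := constant_signs3 b1 b2 b3; lra.
- move=> [|[v1 b1] [|[v2 b2] []]] //= _; rewrite inE andbT => v12.
  apply: divn_lower_bound => //; rewrite natrM.
  by have := SP_count2 oddF b1 b2 v12; have := sgn_mul_le1 b1 b2; lra.
Qed.
End Properties.

Local Close Scope ring_scope.

Theorem mainTheorem10 (F : finFieldType) (hq : (#|F| %% 4 = 1)%N) :
  let q := #|F| in
  (propP (SP F) 1 ((q - 1) %/ 2) /\ propP (SP F) 2 ((q - 5) %/ 4)) /\
  (propP (Tr F) 1 q /\ propP (Tr F) 2 ((q - 1) %/ 2) /\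
   propP (Tr F) 3 ((q - 5) %/ 4)) /\
  (propP (AT (SP F)) 1 (q - 1) /\ propP (AT (SP F)) 2 ((q - 3) %/ 2) /\
   propP (AT (SP F)) 3 (maxn 0 ((q - 9) %/ 4))).
Proof.
have oddF : odd #|F| by rewrite (divn_eq #|F| 4) hq addn1 /= oddM andbF.
split; first by split; [exact: SP_propP1 | exact: SP_propP2].
split; first by split; [exact: Tr_propP1 | split; [exact: Tr_propP2 | exact: Tr_propP3]].
by split; [exact: ATSP_propP1 | split; [exact: ATSP_propP2 | exact: ATSP_propP3]].
Qed.
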